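(* Let $p,q,r\in\mathbb{Z}_{\ge 0}$ with $p+q>0$, $p+r>1$, $q+r>1$ and $p+q+r>2$. Then $$R(p,q,r)=\sum_{a=0}^{p-1}\binom{q+a-1}{a}\,\zeta(\overline{r+q+a},\overline{p-a})+\sum_{b=0}^{q-1}\binom{p+b-1}{b}\,\zeta(r+p+b,\overline{q-b}),$$ $$S(p,q,r)=\sum_{a=0}^{p-1}\binom{q+a-1}{a}\,\zeta(\overline{r+q+a},p-a)+\sum_{b=0}^{q-1}\binom{p+b-1}{b}\,\zeta(\overline{r+p+b},q-b).$$
   Context: Define $$R(p,q,r):=\sum_{m,n=1}^\infty\frac{(-1)^n}{m^p n^q (m+n)^r},\qquad S(p,q,r):=\sum_{m,n=1}^\infty\frac{(-1)^{m+n}}{m^p n^q (m+n)^r}.$$ For positive integers $s,t$ define the alternating double zeta values $$\zeta(\overline{s},\overline{t}):=\sum_{m>n\ge1}\frac{(-1)^{m+n}}{m^s n^t},\quad \zeta(\overline{s},t):=\sum_{m>n\ge1}\frac{(-1)^{m}}{m^s n^t},\quad \zeta(s,\overline{t}):=\sum_{m>n\ge1}\frac{(-1)^{n}}{m^s n^t}.$$ Empty sums are $0$; $\binom{-1}{0}=1$. *)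

From Stdlib Require Import Reals ClassicalEpsilon.
Open Scope R_scope.

Fixpoint sum1 (f : nat -> R) (N : nat) : R :=
  match N with O => 0 | S N' => sum1 f N' + f N end.

Fixpoint sum0 (f : nat -> R) (n : nat) : R :=
  match n with O => 0 | S n' => sum0 f n' + f n' end.

Fixpoint binom (n k : nat) : nat :=
  match n, k with
  | _, O => 1
  | O, S _ => 0
  | S n', S k' => (binom n' k' + binom n' k)%nat
  end.

(* limit of a real sequence (chosen classically; meaningful when it converges) *)
Definition lim (u : nat -> R) : R :=
  epsilon (inhabits 0) (fun l => Un_cv u l).

Definition R_partial (p q r : nat) (N : nat) : R :=
  sum1 (fun m => sum1 (fun n =>
    (-1) ^ n / (INR m ^ p * INR n ^ q * INR (m + n) ^ r)) N) N.

Definition S_partial (p q r : nat) (N : nat) : R :=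
  sum1 (fun m => sum1 (fun n =>
    (-1) ^ (m + n) / (INR m ^ p * INR n ^ q * INR (m + n) ^ r)) N) N.

Definition zeta_bb_partial (s t : nat) (N : nat) : R :=
  sum1 (fun m => sum1 (fun n => (-1) ^ (m + n) / (INR m ^ s * INR n ^ t)) (m - 1)) N.
Definition zeta_b_partial (s t : nat) (N : nat) : R :=
  sum1 (fun m => sum1 (fun n => (-1) ^ m / (INR m ^ s * INR n ^ t)) (m - 1)) N.
Definition zeta__b_partial (s t : nat) (N : nat) : R :=
  sum1 (fun m => sum1 (fun n => (-1) ^ n / (INR m ^ s * INR n ^ t)) (m - 1)) N.

Definition zeta_bb (s t : nat) : R := lim (zeta_bb_partial s t).
Definition zeta_b_ (s t : nat) : R := lim (zeta_b_partial s t).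
Definition zeta__b (s t : nat) : R := lim (zeta__b_partial s t).

From Stdlib Require Import Reals Lra Lia ClassicalEpsilon.
Open Scope R_scope.

(** The idea is the classical partial-fraction identity
      1/(x^p y^q) = sum_{a<p} C(q+a-1,a) / (x^(p-a) (x+y)^(q+a))
                  + sum_{b<q} C(p+b-1,b) / (y^(q-b) (x+y)^(p+b)),
    applied with x = m, y = n.  Summed over the triangle m + n <= N and
    regrouped by M = m + n, each piece becomes a partial sum over
    N >= M > k >= 1 of a double zeta value, with the sign (-1)^n resp.
    (-1)^(m+n) re-expressed as a function of (M, m) or (M, n).

    The absolute bound shows that the
    square partial sums (as in the definition of R and S) and the triangular
    partial sums have the same limit, and that every double zeta series
    involved converges. *)

Lemma sum1_ext f g N :
  (forall k, (1 <= k <= N)%nat -> f k = g k) -> sum1 f N = sum1 g N.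
Proof.
  induction N as [|N IH]; simpl; intros Hfg; auto.
  rewrite IH, Hfg by (intros; try apply Hfg; lia). reflexivity.
Qed.

Lemma sum0_ext f g n :
  (forall k, (k < n)%nat -> f k = g k) -> sum0 f n = sum0 g n.
Proof.
  induction n as [|n IH]; simpl; intros Hfg; auto.
  rewrite IH, Hfg by (intros; try apply Hfg; lia). reflexivity.
Qed.

Lemma sum1_S f N : sum1 f (S N) = sum1 f N + f (S N).
Proof. reflexivity. Qed.

Lemma sum1_plus f g N : sum1 (fun k => f k + g k) N = sum1 f N + sum1 g N.
Proof. induction N; simpl; [ring | rewrite IHN; ring]. Qed.

Lemma sum1_minus f g N : sum1 (fun k => f k - g k) N = sum1 f N - sum1 g N.
Proof. induction N; simpl; [ring | rewrite IHN; ring]. Qed.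

Lemma sum1_scal c f N : sum1 (fun k => c * f k) N = c * sum1 f N.
Proof. induction N; simpl; [ring | rewrite IHN; ring]. Qed.

Lemma sum0_plus f g n : sum0 (fun k => f k + g k) n = sum0 f n + sum0 g n.
Proof. induction n; simpl; [ring | rewrite IHn; ring]. Qed.

Lemma sum0_scal c f n : sum0 (fun k => c * f k) n = c * sum0 f n.
Proof. induction n; simpl; [ring | rewrite IHn; ring]. Qed.

Lemma sum0_zero f n : (forall k, (k < n)%nat -> f k = 0) -> sum0 f n = 0.
Proof.
  intros Hf. rewrite (sum0_ext f (fun _ => 0)) by auto. clear Hf.
  induction n; simpl; lra.
Qed.

Lemma sum1_sum0 (F : nat -> nat -> R) N n :
  sum1 (fun k => sum0 (fun a => F a k) n) N = sum0 (fun a => sum1 (F a) N) n.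
Proof.
  induction N as [|N IH]; simpl.
  - induction n as [|n IHn]; simpl; [reflexivity | rewrite <- IHn; ring].
  - rewrite IH, <- sum0_plus. reflexivity.
Qed.

Lemma sum1_head f N : sum1 f (S N) = f 1%nat + sum1 (fun k => f (S k)) N.
Proof. induction N; simpl in *; [ring | rewrite IHN; ring]. Qed.

Lemma sum0_head f n : sum0 f (S n) = f O + sum0 (fun k => f (S k)) n.
Proof. induction n; simpl in *; [ring | rewrite IHn; ring]. Qed.

Lemma sum1_reflect g K : sum1 g K = sum1 (fun k => g (K + 1 - k)%nat) K.
Proof.
  induction K as [|K IH]; [reflexivity |].
  rewrite (sum1_head (fun k => g (S K + 1 - k)%nat)).
  replace (S K + 1 - 1)%nat with (S K) by lia.
  simpl sum1 at 1. rewrite IH, Rplus_comm. reflexivity.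
Qed.

Lemma sum1_abs f N : Rabs (sum1 f N) <= sum1 (fun k => Rabs (f k)) N.
Proof.
  induction N; simpl; [rewrite Rabs_R0; lra |].
  eapply Rle_trans; [apply Rabs_triang | lra].
Qed.

Lemma sum1_le f g N :
  (forall k, (1 <= k <= N)%nat -> f k <= g k) -> sum1 f N <= sum1 g N.
Proof.
  induction N as [|N IH]; simpl; intros Hfg; [lra |].
  assert (f (S N) <= g (S N)) by (apply Hfg; lia).
  assert (sum1 f N <= sum1 g N) by (apply IH; intros; apply Hfg; lia).
  lra.
Qed.

Lemma sum1_nonneg f N : (forall k, (1 <= k <= N)%nat -> 0 <= f k) -> 0 <= sum1 f N.
Proof.
  intros Hf. assert (Hzero : forall M, sum1 (fun _ => 0) M = 0)
    by (induction M; simpl; lra).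
  rewrite <- (Hzero N). apply sum1_le; auto.
Qed.

Lemma sum1_mono f a b :
  (forall k, (1 <= k <= b)%nat -> 0 <= f k) -> (a <= b)%nat -> sum1 f a <= sum1 f b.
Proof.
  intros Hf Hab. induction b as [|b IH].
  - replace a with O by lia. lra.
  - destruct (Nat.eq_dec a (S b)) as [-> | Hne]; [lra |].
    simpl. assert (sum1 f a <= sum1 f b) by (apply IH; [intros; apply Hf | ]; lia).
    assert (0 <= f (S b)) by (apply Hf; lia). lra.
Qed.

Lemma sum1_diff_abs f a b : (a <= b)%nat ->
  Rabs (sum1 f b - sum1 f a)
  <= sum1 (fun k => Rabs (f k)) b - sum1 (fun k => Rabs (f k)) a.
Proof.
  intros Hab. induction b as [|b IH].
  - replace a with O by lia. simpl. rewrite Rminus_diag, Rabs_R0. lra.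
  - destruct (Nat.eq_dec a (S b)) as [-> | Hne].
    { rewrite !Rminus_diag, Rabs_R0. lra. }
    simpl. specialize (IH ltac:(lia)).
    replace (sum1 f b + f (S b) - sum1 f a) with ((sum1 f b - sum1 f a) + f (S b)) by ring.
    eapply Rle_trans; [apply Rabs_triang | lra].
Qed.

Lemma Un_cv_ext u v l : (forall N, u N = v N) -> Un_cv v l -> Un_cv u l.
Proof.
  intros Euv Hv eps Heps. destruct (Hv eps Heps) as [N HN].
  exists N. intros n Hn. rewrite Euv. auto.
Qed.

Lemma lim_spec u l : Un_cv u l -> lim u = l.
Proof.
  intros Hl. unfold lim.
  pose proof (epsilon_spec (inhabits 0) (fun l => Un_cv u l) (ex_intro _ l Hl)).
  eapply UL_sequence; eauto.
Qed.

Lemma series_cv_of_abs_bounded (x : nat -> R) (B : R) :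
  (forall N, sum1 (fun k => Rabs (x k)) N <= B) -> exists l, Un_cv (sum1 x) l.
Proof.
  intros HB.
  set (A := sum1 (fun k => Rabs (x k))).
  assert (HA : {l | Un_cv A l}).
  { apply growing_cv.
    - intro n. unfold A. simpl. pose proof (Rabs_pos (x (S n))). lra.
    - exists B. intros y [i ->]. apply HB. }
  pose proof (CV_Cauchy A HA) as HAC.
  assert (HC : Cauchy_crit (sum1 x)).
  { intros eps Heps. destruct (HAC eps Heps) as [N HN]. exists N. intros n m Hn Hm.
    unfold Rdist in *.
    destruct (Compare_dec.le_lt_dec m n).
    - specialize (HN n m Hn Hm).
      eapply Rle_lt_trans; [apply sum1_diff_abs; auto |].
      eapply Rle_lt_trans; [apply Rle_abs | exact HN].
    - specialize (HN m n Hm Hn). rewrite Rabs_minus_sym.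
      eapply Rle_lt_trans; [apply sum1_diff_abs; lia |].
      eapply Rle_lt_trans; [apply Rle_abs | exact HN]. }
  destruct (R_complete _ HC) as [l Hl]. exists l. exact Hl.
Qed.

Lemma cv_const c : Un_cv (fun _ => c) c.
Proof. intros eps Heps. exists O. intros. unfold Rdist. rewrite Rminus_diag, Rabs_R0. lra. Qed.

Lemma sum0_cv (c : nat -> R) (u : nat -> nat -> R) (l : nat -> R) n :
  (forall a, (a < n)%nat -> Un_cv (u a) (l a)) ->
  Un_cv (fun N => sum0 (fun a => c a * u a N) n) (sum0 (fun a => c a * l a) n).
Proof.
  induction n as [|n IH]; intros Hu; simpl.
  - apply cv_const.
  - apply CV_plus; [apply IH; intros; apply Hu; lia |].
    apply CV_mult; [apply cv_const | apply Hu; lia].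
Qed.

Lemma cv_squeeze0 u v : (forall N, Rabs (u N) <= v N) -> Un_cv v 0 -> Un_cv u 0.
Proof.
  intros Huv Hv eps Heps. destruct (Hv eps Heps) as [N HN]. exists N. intros n Hn.
  specialize (HN n Hn). unfold Rdist in *. rewrite Rminus_0_r in *.
  pose proof (Huv n). pose proof (Rle_abs (v n)). lra.
Qed.

Lemma cv_double_diff A l : Un_cv A l -> Un_cv (fun N => A (2 * N)%nat - A N) 0.
Proof.
  intros HA eps Heps. destruct (HA (eps / 2) ltac:(lra)) as [N HN]. exists N.
  intros n Hn. pose proof (HN n Hn). pose proof (HN (2 * n)%nat ltac:(lia)).
  unfold Rdist in *. rewrite Rminus_0_r.
  replace (A (2 * n)%nat - A n) with ((A (2 * n)%nat - l) - (A n - l)) by ring.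
  eapply Rle_lt_trans; [apply Rabs_triang |]. rewrite Rabs_Ropp. lra.
Qed.

(** * Harmonic-number estimates *)

Definition harmonic (N : nat) : R := sum1 (fun k => / INR k) N.

Lemma inv_INR_pos k : (1 <= k)%nat -> 0 < / INR k.
Proof. intros Hk. apply Rinv_0_lt_compat, lt_0_INR. lia. Qed.

Lemma harmonic_nonneg N : 0 <= harmonic N.
Proof. apply sum1_nonneg. intros k Hk. left. apply inv_INR_pos. lia. Qed.

Lemma harmonic_mono a b : (a <= b)%nat -> harmonic a <= harmonic b.
Proof. intros Hab. apply sum1_mono; auto. intros k Hk. left. apply inv_INR_pos. lia. Qed.

Lemma harmonic_S N : harmonic (S N) = harmonic N + / (INR N + 1).
Proof. rewrite <- S_INR. reflexivity. Qed.

Lemma harmonic_telescope_step k h : 1 <= k -> 0 <= h ->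
  h / k ^ 2 <= 2 * ((1 + h) / k - (1 + (h + / (k + 1))) / (k + 1)).
Proof.
  intros Hk Hh.
  assert (E : 2 * ((1 + h) / k - (1 + (h + / (k + 1))) / (k + 1)) - h / k ^ 2
              = (2 * k + h * (k * k - 1)) / (k ^ 2 * (k + 1) ^ 2)) by (field; lra).
  assert (0 <= (2 * k + h * (k * k - 1)) / (k ^ 2 * (k + 1) ^ 2)).
  { assert (0 <= h * (k * k - 1)) by (apply Rmult_le_pos; nra).
    apply Rmult_le_pos; [lra |]. left. apply Rinv_0_lt_compat. simpl. nra. }
  lra.
Qed.

(** sum_{k<=N} H_k / k^2 <= 4, via the invariant
    sum_{k<=N} H_k / k^2 + 2 (1 + H_{N+1}) / (N+1) <= 4. *)
Lemma sum_harmonic_over_square N :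
  sum1 (fun k => harmonic k / INR k ^ 2) N <= 4.
Proof.
  assert (Inv : forall N, sum1 (fun k => harmonic k / INR k ^ 2) N
                          + 2 * ((1 + harmonic (S N)) / INR (S N)) <= 4).
  { induction N0 as [|N0 IH].
    - unfold harmonic. simpl. lra.
    - rewrite sum1_S, (harmonic_S (S N0)), (S_INR (S N0)).
      assert (1 <= INR (S N0)) by (apply (le_INR 1); lia).
      pose proof (harmonic_telescope_step _ _ H (harmonic_nonneg (S N0))).
      lra. }
  pose proof (Inv N).
  assert (0 <= (1 + harmonic (S N)) / INR (S N)).
  { apply Rmult_le_pos; [pose proof (harmonic_nonneg (S N)); lra |].
    left. apply inv_INR_pos. lia. }
  lra.
Qed.

Lemma harmonic_shift m N : sum1 (fun n => / INR (n + m)) N = harmonic (N + m) - harmonic m.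
Proof. induction N; simpl; [ring |]. rewrite IHN. unfold harmonic. simpl. ring. Qed.

(** sum_{n<=N} 1/(n(n+m)) = (H_N - H_{N+m} + H_m)/m <= H_m/m. *)
Lemma sum_inv_n_n_plus_m m N : (1 <= m)%nat ->
  sum1 (fun n => / (INR n * INR (n + m))) N <= harmonic m / INR m.
Proof.
  intros Hm. assert (0 < INR m) by (apply lt_0_INR; lia).
  transitivity (/ INR m * (harmonic N - (harmonic (N + m) - harmonic m))).
  - rewrite <- harmonic_shift. unfold harmonic at 1.
    rewrite <- sum1_minus, <- sum1_scal.
    right. apply sum1_ext. intros n Hn. rewrite plus_INR.
    assert (0 < INR n) by (apply lt_0_INR; lia). field. lra.
  - assert (harmonic N <= harmonic (N + m)) by (apply harmonic_mono; lia).
    unfold Rdiv. rewrite (Rmult_comm (harmonic m)).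
    apply Rmult_le_compat_l; [left; apply Rinv_0_lt_compat |]; lra.
Qed.

(** The absolute bound for the Tornheim-type sums with p = q = r = 1. *)
Lemma square_sum_inv_mn_bound N :
  sum1 (fun m => sum1 (fun n => 2 / (INR m * INR n * INR (m + n))) N) N <= 8.
Proof.
  transitivity (sum1 (fun m => 2 * (harmonic m / INR m ^ 2)) N).
  - apply sum1_le. intros m Hm.
    assert (0 < INR m) by (apply lt_0_INR; lia).
    transitivity (2 / INR m * sum1 (fun n => / (INR n * INR (n + m))) N).
    + rewrite <- sum1_scal. right. apply sum1_ext. intros n Hn.
      assert (0 < INR n) by (apply lt_0_INR; lia). rewrite !plus_INR. field. lra.
    + replace (2 * (harmonic m / INR m ^ 2)) with (2 / INR m * (harmonic m / INR m))
        by (field; lra).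
      apply Rmult_le_compat_l; [unfold Rdiv; pose proof (inv_INR_pos m ltac:(lia)); lra |].
      apply sum_inv_n_n_plus_m. lia.
  - rewrite sum1_scal. pose proof (sum_harmonic_over_square N). lra.
Qed.

(** * The partial-fraction identity *)

Lemma binom_lt n k : (n < k)%nat -> binom n k = 0%nat.
Proof.
  revert k; induction n as [|n IH]; intros k Hk; destruct k; simpl; try lia; auto.
  rewrite !IH by lia. reflexivity.
Qed.

Lemma binom_n0 n : binom n 0 = 1%nat.
Proof. destruct n; reflexivity. Qed.

Definition pf_half (x z : R) (p q : nat) : R :=
  sum0 (fun a => INR (binom (q + a - 1) a) / (x ^ (p - a) * z ^ (q + a))) p.

Lemma pf_half_q0 x z p : (1 <= p)%nat -> x <> 0 -> pf_half x z p 0 = / x ^ p.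
Proof.
  intros Hp Hx. destruct p as [|P]; [lia |]. unfold pf_half. rewrite sum0_head.
  rewrite sum0_zero.
  2: { intros k Hk. rewrite binom_lt by lia. simpl INR. unfold Rdiv. ring. }
  simpl. field. split; [apply pow_nonzero |]; auto.
Qed.

(** Pascal's rule C(Q+a, a+1) = C(Q+a-1, a) + C(Q+a-1, a+1), lifted to [pf_half]. *)
Lemma pf_half_pascal x z P Q : 0 < x -> 0 < z ->
  pf_half x z (S P) (S Q) = / z * (pf_half x z P (S Q) + pf_half x z (S P) Q).
Proof.
  intros Hx Hz. unfold pf_half. rewrite !sum0_head.
  rewrite !binom_n0, !Nat.add_0_r, !Nat.sub_0_r.
  assert (Hshift :
    sum0 (fun k => INR (binom (S Q + S k - 1) (S k)) / (x ^ (S P - S k) * z ^ (S Q + S k))) P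
    = / z * sum0 (fun k => INR (binom (S Q + k - 1) k) / (x ^ (P - k) * z ^ (S Q + k))) P
    + / z * sum0 (fun k => INR (binom (Q + S k - 1) (S k)) / (x ^ (S P - S k) * z ^ (Q + S k))) P).
  { rewrite <- !sum0_scal, <- sum0_plus. apply sum0_ext. intros a Ha.
    replace (S Q + S a - 1)%nat with (S (Q + a)) by lia.
    replace (S Q + a - 1)%nat with (Q + a)%nat by lia.
    replace (Q + S a - 1)%nat with (Q + a)%nat by lia.
    replace (S Q + S a)%nat with (S (S Q + a)) by lia.
    replace (Q + S a)%nat with (S Q + a)%nat by lia.
    replace (S P - S a)%nat with (P - a)%nat by lia.
    simpl binom. rewrite plus_INR. simpl pow.
    field. repeat split; try apply pow_nonzero; lra. }
  rewrite Hshift. change (z ^ S Q) with (z * z ^ Q). simpl INR.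
  field. repeat split; try apply pow_nonzero; lra.
Qed.

(** 1/(x^p y^q) = sum_{a<p} C(q+a-1,a)/(x^(p-a)(x+y)^(q+a))
                + sum_{b<q} C(p+b-1,b)/(y^(q-b)(x+y)^(p+b)),
    by induction on p + q using 1/(xy) = (1/x + 1/y)/(x+y). *)
Lemma partial_fractions x y p q : 0 < x -> 0 < y -> (0 < p + q)%nat ->
  / (x ^ p * y ^ q) = pf_half x (x + y) p q + pf_half y (x + y) q p.
Proof.
  intros Hx Hy. revert p q.
  assert (Main : forall n p q, (p + q <= n)%nat -> (0 < p + q)%nat ->
            / (x ^ p * y ^ q) = pf_half x (x + y) p q + pf_half y (x + y) q p).
  { induction n as [|n IH]; intros p q Hn Hpq; [lia |].
    destruct p as [|P].
    { rewrite (pf_half_q0 y) by (lia || lra). unfold pf_half. simpl. field.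
      repeat split; try apply pow_nonzero; lra. }
    destruct q as [|Q].
    { rewrite (pf_half_q0 x) by (lia || lra). unfold pf_half. simpl. field.
      repeat split; try apply pow_nonzero; lra. }
    assert (Split : / (x ^ S P * y ^ S Q)
                    = / (x + y) * (/ (x ^ P * y ^ S Q) + / (x ^ S P * y ^ Q))).
    { simpl. field. repeat split; try apply pow_nonzero; lra. }
    rewrite Split, (IH P (S Q)), (IH (S P) Q) by lia.
    rewrite (pf_half_pascal x), (pf_half_pascal y) by lra.
    ring. }
  intros p q. apply (Main (p + q)%nat). lia.
Qed.

Lemma weighted_partial_fractions x y s p q r : 0 < x -> 0 < y -> (0 < p + q)%nat ->
  s / (x ^ p * y ^ q * (x + y) ^ r)
  = sum0 (fun a => INR (binom (q + a - 1) a) * (s / ((x + y) ^ (r + q + a) * x ^ (p - a)))) p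
  + sum0 (fun b => INR (binom (p + b - 1) b) * (s / ((x + y) ^ (r + p + b) * y ^ (q - b)))) q.
Proof.
  intros Hx Hy Hpq.
  replace (s / (x ^ p * y ^ q * (x + y) ^ r)) with (s / (x + y) ^ r * / (x ^ p * y ^ q))
    by (field; repeat split; try apply pow_nonzero; lra).
  rewrite (partial_fractions x y p q Hx Hy Hpq). unfold pf_half.
  rewrite Rmult_plus_distr_l, <- !sum0_scal.
  f_equal; apply sum0_ext; intros a Ha; rewrite <- !Nat.add_assoc, !pow_add;
    field; repeat split; try apply pow_nonzero; lra.
Qed.

(** * Square, triangular and strict double sums *)

Definition square_sum (f : nat -> nat -> R) (N : nat) : R :=
  sum1 (fun m => sum1 (f m) N) N.

Definition triangle_sum (f : nat -> nat -> R) (N : nat) : R :=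
  sum1 (fun m => sum1 (f m) (N - m)) N.

Definition strict_sum (psi : nat -> nat -> R) (N : nat) : R :=
  sum1 (fun M => sum1 (psi M) (M - 1)) N.

Lemma triangle_sum_ext f g N :
  (forall m n, (1 <= m)%nat -> (1 <= n)%nat -> f m n = g m n) ->
  triangle_sum f N = triangle_sum g N.
Proof.
  intros Hfg. apply sum1_ext. intros m Hm. apply sum1_ext. intros n Hn. apply Hfg; lia.
Qed.

Lemma strict_sum_ext psi chi N :
  (forall M k, (1 <= k <= M - 1)%nat -> psi M k = chi M k) ->
  strict_sum psi N = strict_sum chi N.
Proof.
  intros Hpc. apply sum1_ext. intros M HM. apply sum1_ext. intros k Hk. apply Hpc; lia.
Qed.

Lemma triangle_sum_plus f g N :
  triangle_sum (fun m n => f m n + g m n) N = triangle_sum f N + triangle_sum g N.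
Proof. unfold triangle_sum. rewrite <- sum1_plus. apply sum1_ext. intros. apply sum1_plus. Qed.

Lemma triangle_sum_lincomb (c : nat -> R) (F : nat -> nat -> nat -> R) p N :
  triangle_sum (fun m n => sum0 (fun a => c a * F a m n) p) N
  = sum0 (fun a => c a * triangle_sum (F a) N) p.
Proof.
  unfold triangle_sum.
  transitivity (sum1 (fun m => sum0 (fun a => c a * sum1 (F a m) (N - m)) p) N).
  - apply sum1_ext. intros m Hm. rewrite (sum1_sum0 (fun a n => c a * F a m n)).
    apply sum0_ext. intros. apply sum1_scal.
  - rewrite (sum1_sum0 (fun a m => c a * sum1 (F a m) (N - m))).
    apply sum0_ext. intros. apply sum1_scal.
Qed.

Lemma triangle_sum_S f N :
  triangle_sum f (S N) = triangle_sum f N + sum1 (fun m => f m (S N - m)%nat) N.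
Proof.
  unfold triangle_sum. rewrite sum1_S, Nat.sub_diag, Rplus_0_r, <- sum1_plus.
  apply sum1_ext. intros m Hm.
  replace (S N - m)%nat with (S (N - m)) by lia. apply sum1_S.
Qed.

Lemma triangle_sum_antidiagonals f N :
  triangle_sum f N = strict_sum (fun M k => f k (M - k)%nat) N.
Proof.
  induction N as [|N IH]; [reflexivity |].
  rewrite triangle_sum_S, IH. unfold strict_sum. rewrite sum1_S.
  replace (S N - 1)%nat with N by lia. reflexivity.
Qed.

Lemma triangle_sum_by_first psi N :
  triangle_sum (fun m n => psi (m + n)%nat m) N = strict_sum psi N.
Proof.
  rewrite triangle_sum_antidiagonals. apply strict_sum_ext. intros M k Hk.
  f_equal. lia.
Qed.

(** A triangle sum of a function of (m + n, n) is a strict sum, after k <-> M - k. *)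
Lemma triangle_sum_by_second psi N :
  triangle_sum (fun m n => psi (m + n)%nat n) N = strict_sum psi N.
Proof.
  rewrite triangle_sum_antidiagonals. apply sum1_ext. intros M HM.
  rewrite (sum1_reflect (psi M)). apply sum1_ext. intros k Hk. f_equal; lia.
Qed.

(** If the triangular sums of |f| are bounded, the square and the triangular
    partial sums of f differ by a sequence tending to 0: the difference lies in
    the region N < m + n <= 2N. *)
Lemma square_triangle_gap (f : nat -> nat -> R) (B : R) :
  (forall N, triangle_sum (fun m n => Rabs (f m n)) N <= B) ->
  Un_cv (fun N => square_sum f N - triangle_sum f N) 0.
Proof.
  intros HB. set (g := fun m n => Rabs (f m n)) in *.
  assert (Hg : forall m n, 0 <= g m n) by (intros; apply Rabs_pos).
  assert (Hgrow : Un_growing (triangle_sum g)).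
  { intros N. rewrite triangle_sum_S.
    assert (0 <= sum1 (fun m => g m (S N - m)%nat) N) by (apply sum1_nonneg; auto).
    lra. }
  destruct (growing_cv _ Hgrow) as [lg Hlg].
  { exists B. intros y [i ->]. apply HB. }
  apply (cv_squeeze0 _ (fun N => triangle_sum g (2 * N) - triangle_sum g N));
    [| exact (cv_double_diff _ _ Hlg)].
  intros N. unfold square_sum, triangle_sum at 1. rewrite <- sum1_minus.
  eapply Rle_trans; [apply sum1_abs |].
  apply Rle_trans with (sum1 (fun m => sum1 (g m) (2 * N - m) - sum1 (g m) (N - m)) N).
  - apply sum1_le. intros m Hm.
    eapply Rle_trans; [apply sum1_diff_abs; lia |].
    apply Rplus_le_compat_r, sum1_mono; [intros; apply Hg | lia].
  - rewrite sum1_minus. apply Rplus_le_compat_r.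
    apply sum1_mono; [| lia]. intros m Hm. apply sum1_nonneg. auto.
Qed.

Lemma abs_div_le e A B : Rabs e <= 1 -> 0 < B -> B <= A -> Rabs (e / A) <= / B.
Proof.
  intros He HB HA. unfold Rdiv. rewrite Rabs_mult, Rabs_inv, (Rabs_right A) by lra.
  rewrite <- (Rmult_1_l (/ B)).
  apply Rmult_le_compat; auto using Rabs_pos.
  - left. apply Rinv_0_lt_compat. lra.
  - apply Rinv_le_contravar; lra.
Qed.

(** Under the hypotheses on (p, q, r), the Tornheim denominator dominates
    x y (x + y) / 2 for x, y >= 1; the minimal exponent triples are
    (2,2,0), (1,1,1), (0,1,2) and (1,0,2). *)
Lemma tornheim_denominator_lower x y p q r :
  1 <= x -> 1 <= y ->
  (0 < p + q)%nat -> (1 < p + r)%nat -> (1 < q + r)%nat -> (2 < p + q + r)%nat ->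
  x * y * (x + y) / 2 <= x ^ p * y ^ q * (x + y) ^ r.
Proof.
  intros Hx Hy Hpq Hpr Hqr Hpqr.
  assert (Mono : forall p0 q0 r0, (p0 <= p)%nat -> (q0 <= q)%nat -> (r0 <= r)%nat ->
            x ^ p0 * y ^ q0 * (x + y) ^ r0 <= x ^ p * y ^ q * (x + y) ^ r).
  { intros p0 q0 r0 Hp Hq Hr.
    apply Rmult_le_compat; [apply Rmult_le_pos; apply pow_le; lra | apply pow_le; lra | |
                            apply Rle_pow; auto; lra].
    apply Rmult_le_compat; [apply pow_le; lra | apply pow_le; lra | |]; apply Rle_pow; auto; lra. }
  destruct r as [|[|r]].
  - apply Rle_trans with (x ^ 2 * y ^ 2 * (x + y) ^ 0); [| apply Mono; lia].
    assert (0 <= (x * y) * (2 * (x * y) - x - y)) by (apply Rmult_le_pos; nra).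
    simpl. nra.
  - apply Rle_trans with (x ^ 1 * y ^ 1 * (x + y) ^ 1); [simpl; nra | apply Mono; lia].
  - destruct p as [|p].
    + apply Rle_trans with (x ^ 0 * y ^ 1 * (x + y) ^ 2); [simpl; nra | apply Mono; lia].
    + apply Rle_trans with (x ^ 1 * y ^ 0 * (x + y) ^ 2); [simpl; nra | apply Mono; lia].
Qed.

Lemma tornheim_abs_bound (sg : nat -> nat -> R) p q r N :
  (0 < p + q)%nat -> (1 < p + r)%nat -> (1 < q + r)%nat -> (2 < p + q + r)%nat ->
  (forall m n, Rabs (sg m n) <= 1) ->
  triangle_sum (fun m n => Rabs (sg m n / (INR m ^ p * INR n ^ q * INR (m + n) ^ r))) N
  <= 8.
Proof.
  intros Hpq Hpr Hqr Hpqr Hsg.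
  eapply Rle_trans; [| apply (square_sum_inv_mn_bound N)].
  apply sum1_le. intros m Hm.
  eapply Rle_trans; [apply sum1_mono; [intros; apply Rabs_pos | apply (Nat.le_sub_l N m)] |].
  apply sum1_le. intros n Hn.
  assert (Hx : 1 <= INR m) by (apply (le_INR 1); lia).
  assert (Hy : 1 <= INR n) by (apply (le_INR 1); lia).
  rewrite plus_INR.
  replace (2 / (INR m * INR n * (INR m + INR n)))
    with (/ (INR m * INR n * (INR m + INR n) / 2)) by (field; nra).
  apply abs_div_le; auto.
  - assert (0 < INR m * INR n * (INR m + INR n)) by (apply Rmult_lt_0_compat; nra). lra.
  - apply tornheim_denominator_lower; auto.
Qed.

(** Every double series sum_{M>k>=1} e(M,k)/(M^s k^t) with |e| <= 1, s >= 2,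
    t >= 1 converges (absolutely: its terms are bounded by 1/(M^2 k)). *)
Lemma strict_sum_cv (e : nat -> nat -> R) s t :
  (forall M k, Rabs (e M k) <= 1) -> (2 <= s)%nat -> (1 <= t)%nat ->
  exists l, Un_cv (strict_sum (fun M k => e M k / (INR M ^ s * INR k ^ t))) l.
Proof.
  intros He Hs Ht. apply (series_cv_of_abs_bounded _ 4). intros N.
  eapply Rle_trans; [| apply (sum_harmonic_over_square N)].
  apply sum1_le. intros M HM.
  assert (HM1 : 1 <= INR M) by (apply (le_INR 1); lia).
  eapply Rle_trans; [apply sum1_abs |].
  transitivity (sum1 (fun k => / INR M ^ 2 * / INR k) (M - 1)).
  - apply sum1_le. intros k Hk.
    assert (Hk1 : 1 <= INR k) by (apply (le_INR 1); lia).
    rewrite <- Rinv_mult. apply abs_div_le; auto.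
    + apply Rmult_lt_0_compat; [apply pow_lt |]; lra.
    + apply Rmult_le_compat; [apply pow_le; lra | lra | apply Rle_pow; auto |].
      rewrite <- (pow_1 (INR k)) at 1. apply Rle_pow; auto.
  - rewrite sum1_scal. unfold Rdiv. rewrite Rmult_comm.
    apply Rmult_le_compat_r; [left; apply Rinv_0_lt_compat, pow_lt; lra |].
    apply harmonic_mono. lia.
Qed.

Section SignPattern.

(** A sign pattern sg(m, n), bounded by 1, which can be read both as a
    function e1(m + n, m) and as a function e2(m + n, n). *)
Variables sg e1 e2 : nat -> nat -> R.
Hypothesis sg_as_e1 : forall m n, (1 <= m)%nat -> (1 <= n)%nat -> sg m n = e1 (m + n)%nat m.
Hypothesis sg_as_e2 : forall m n, (1 <= m)%nat -> (1 <= n)%nat -> sg m n = e2 (m + n)%nat n.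

Let tornheim p q r (m n : nat) : R := sg m n / (INR m ^ p * INR n ^ q * INR (m + n) ^ r).
Let zeta1 s t (M k : nat) : R := e1 M k / (INR M ^ s * INR k ^ t).
Let zeta2 s t (M k : nat) : R := e2 M k / (INR M ^ s * INR k ^ t).

Lemma triangle_sum_decomposition p q r N : (0 < p + q)%nat ->
  triangle_sum (tornheim p q r) N
  = sum0 (fun a => INR (binom (q + a - 1) a) * strict_sum (zeta1 (r + q + a) (p - a)) N) p
  + sum0 (fun b => INR (binom (p + b - 1) b) * strict_sum (zeta2 (r + p + b) (q - b)) N) q.
Proof.
  intros Hpq.
  rewrite (triangle_sum_ext _ (fun m n =>
      sum0 (fun a => INR (binom (q + a - 1) a) * zeta1 (r + q + a) (p - a) (m + n)%nat m) p
    + sum0 (fun b => INR (binom (p + b - 1) b) * zeta2 (r + p + b) (q - b) (m + n)%nat n) q)).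
  2: { intros m n Hm Hn. unfold tornheim, zeta1, zeta2.
       rewrite <- (sg_as_e1 m n), <- (sg_as_e2 m n), !plus_INR by auto.
       apply weighted_partial_fractions; auto; apply lt_0_INR; lia. }
  rewrite triangle_sum_plus.
  rewrite (triangle_sum_lincomb _ (fun a m n => zeta1 (r + q + a) (p - a) (m + n)%nat m)).
  rewrite (triangle_sum_lincomb _ (fun b m n => zeta2 (r + p + b) (q - b) (m + n)%nat n)).
  f_equal; apply sum0_ext; intros; f_equal.
  - apply triangle_sum_by_first.
  - apply triangle_sum_by_second.
Qed.

Hypothesis sg_bound : forall m n, Rabs (sg m n) <= 1.
Hypothesis e1_bound : forall M k, Rabs (e1 M k) <= 1.
Hypothesis e2_bound : forall M k, Rabs (e2 M k) <= 1.

Theorem alternating_tornheim_eval p q r :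
  (0 < p + q)%nat -> (1 < p + r)%nat -> (1 < q + r)%nat -> (2 < p + q + r)%nat ->
  Un_cv (square_sum (tornheim p q r))
   (sum0 (fun a => INR (binom (q + a - 1) a) * lim (strict_sum (zeta1 (r + q + a) (p - a)))) p
  + sum0 (fun b => INR (binom (p + b - 1) b) * lim (strict_sum (zeta2 (r + p + b) (q - b)))) q).
Proof.
  intros Hpq Hpr Hqr Hpqr.
  assert (Htri : Un_cv (triangle_sum (tornheim p q r))
   (sum0 (fun a => INR (binom (q + a - 1) a) * lim (strict_sum (zeta1 (r + q + a) (p - a)))) p
  + sum0 (fun b => INR (binom (p + b - 1) b) * lim (strict_sum (zeta2 (r + p + b) (q - b)))) q)).
  { apply (Un_cv_ext _ _ _ (fun N => triangle_sum_decomposition p q r N Hpq)).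
    apply CV_plus; apply sum0_cv; intros a Ha; unfold zeta1, zeta2.
    - destruct (strict_sum_cv e1 (r + q + a) (p - a)) as [l Hl]; auto; try lia.
      rewrite (lim_spec _ _ Hl). exact Hl.
    - destruct (strict_sum_cv e2 (r + p + a) (q - a)) as [l Hl]; auto; try lia.
      rewrite (lim_spec _ _ Hl). exact Hl. }
  pose proof (square_triangle_gap (tornheim p q r) 8
                (fun N => tornheim_abs_bound sg p q r N Hpq Hpr Hqr Hpqr sg_bound)) as Hgap.
  apply (Un_cv_ext _ (fun N => triangle_sum (tornheim p q r) N
                               + (square_sum (tornheim p q r) N - triangle_sum (tornheim p q r) N))).
  { intros N. ring. }
  rewrite <- Rplus_0_r. apply CV_plus; assumption.
Qed.

End SignPattern.

Lemma neg_one_pow_shift m n : (-1) ^ n = (-1) ^ (m + n + m).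
Proof.
  replace (m + n + m)%nat with (n + 2 * m)%nat by lia.
  rewrite pow_add, pow_mult. replace ((-1) ^ 2) with 1 by ring. rewrite pow1. ring.
Qed.

Lemma neg_one_pow_bound n : Rabs ((-1) ^ n) <= 1.
Proof. apply Req_le, pow_1_abs. Qed.

(** With M = m + n, the sign (-1)^n of R(p,q,r) equals (-1)^(M+m) and (-1)^n,
    giving zeta(bar, bar) and zeta(_, bar); the sign (-1)^(m+n) of S(p,q,r)
    equals (-1)^M, giving zeta(bar, _) in both halves. *)
Theorem corollary2 (p q r : nat)
  (Hpq : (0 < p + q)%nat) (Hpr : (1 < p + r)%nat) (Hqr : (1 < q + r)%nat)
  (Hpqr : (2 < p + q + r)%nat) :
  Un_cv (R_partial p q r)
    (sum0 (fun a => INR (binom (q + a - 1) a) * zeta_bb (r + q + a) (p - a)) p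
     + sum0 (fun b => INR (binom (p + b - 1) b) * zeta__b (r + p + b) (q - b)) q)
  /\
  Un_cv (S_partial p q r)
    (sum0 (fun a => INR (binom (q + a - 1) a) * zeta_b_ (r + q + a) (p - a)) p
     + sum0 (fun b => INR (binom (p + b - 1) b) * zeta_b_ (r + p + b) (q - b)) q).
Proof.
  split.
  - exact (alternating_tornheim_eval
             (fun m n => (-1) ^ n) (fun M k => (-1) ^ (M + k)) (fun M k => (-1) ^ k)
             (fun m n _ _ => neg_one_pow_shift m n) (fun m n _ _ => eq_refl)
             (fun m n => neg_one_pow_bound n) (fun M k => neg_one_pow_bound (M + k))
             (fun M k => neg_one_pow_bound k) p q r Hpq Hpr Hqr Hpqr).
  - exact (alternating_tornheim_eval
             (fun m n => (-1) ^ (m + n)) (fun M k => (-1) ^ M) (fun M k => (-1) ^ M)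
             (fun m n _ _ => eq_refl) (fun m n _ _ => eq_refl)
             (fun m n => neg_one_pow_bound (m + n)) (fun M k => neg_one_pow_bound M)
             (fun M k => neg_one_pow_bound M) p q r Hpq Hpr Hqr Hpqr).
Qed.
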